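(* Let $\mathcal{K}^{\langle\infty\rangle}$ be a planar unbounded simple nested fractal, let $M\in\mathbb{Z}$ and let $\ell_{M,0}:V_M^{\langle M\rangle}\to\mathcal{A}$ be a bijection. Then $\mathcal{K}^{\langle\infty\rangle}$ has the good labelling property if and only if there exists an extension $\widetilde{\ell}_{M,0}:V_M^{\langle M+1\rangle}\to\mathcal{A}$ of $\ell_{M,0}$ such that for every $M$-complex $\Delta_M\subset\mathcal{K}^{\langle M+1\rangle}$, written as $\Delta_M=\mathcal{K}^{\langle M\rangle}+L^{M+1}\nu_{i}$ with $i\in\{1,\dots,N\}$, there exists a rotation $R_{\Delta_M}\in\mathcal{R}_M$ with $$\widetilde{\ell}_{M,0}\big(R_{\Delta_M}(v-L^{M+1}\nu_{i})\big)=\widetilde{\ell}_{M,0}(v),\qquad v\in V(\Delta_M).$$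
   Context: Setting: $L>1$, $N\ge2$, $\nu_1=0,\dots,\nu_N\in\mathbb{R}^2$, $\Psi_i(x)=x/L+\nu_i$, and $\mathcal{K}^{\langle 0\rangle}=\bigcup_i\Psi_i(\mathcal{K}^{\langle 0\rangle})$ is a planar simple nested fractal (essential fixed points $V_0^{\langle0\rangle}$: fixed points $x$ for which there are another fixed point $y$ and $\Psi_i\ne\Psi_j$ with $\Psi_i(x)=\Psi_j(y)$; open set condition, nesting $\Psi_i(\mathcal{K}^{\langle 0\rangle})\cap\Psi_j(\mathcal{K}^{\langle 0\rangle})=\Psi_i(V_0^{\langle 0\rangle})\cap\Psi_j(V_0^{\langle 0\rangle})$ for $i\ne j$, symmetry with respect to perpendicular bisectors of pairs of essential fixed points, and connectivity). Let $k=\#V_0^{\langle0\rangle}\ge3$; $V_0^{\langle0\rangle}$ spans a regular $k$-gon. $\mathcal{K}^{\langle M\rangle}=L^M\mathcal{K}^{\langle 0\rangle}$ ($M\in\mathbb{Z}$), $\mathcal{K}^{\langle\infty\rangle}=\bigcup_{M\ge0}\mathcal{K}^{\langle M\rangle}$. An $M$-complex is $\Delta_M=\mathcal{K}^{\langle M\rangle}+\nu_{\Delta_M}$, $\nu_{\Delta_M}=\sum_{j=M+1}^{J}L^j\nu_{i_j}$ ($J\ge M+1$), with vertex set $V(\Delta_M)=L^MV_0^{\langle0\rangle}+\nu_{\Delta_M}$. $V_M^{\langle M\rangle}=L^MV_0^{\langle0\rangle}$; $V_M^{\langle M+1\rangle}$ is the union of $V(\Delta_M)$ over $M$-complexes $\Delta_M\subset\mathcal{K}^{\langle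 M+1\rangle}$; $V_M^{\langle\infty\rangle}$ is the union of $V(\Delta_M)$ over all $M$-complexes. $\mathcal{A}$ is an alphabet of $k$ symbols; $\mathcal{R}_M$ is the set of the $k$ rotations about the barycenter of $\mathcal{K}^{\langle M\rangle}$ mapping $V_M^{\langle M\rangle}$ onto itself. A good labelling function of order $M$ is $\ell_M:V_M^{\langle\infty\rangle}\to\mathcal{A}$ that is bijective on $V_M^{\langle M\rangle}$ and such that for each $M$-complex $\Delta_M=\mathcal{K}^{\langle M\rangle}+\nu_{\Delta_M}$ there is $R_{\Delta_M}\in\mathcal{R}_M$ with $\ell_M(v)=\ell_M(R_{\Delta_M}(v-\nu_{\Delta_M}))$, $v\in V(\Delta_M)$. $\mathcal{K}^{\langle\infty\rangle}$ has the good labelling property if a good labelling function of some order exists. *)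

From HB Require Import structures.
From mathcomp Require Import all_boot all_order all_algebra.
From mathcomp Require Import all_classical all_reals all_analysis.
Set Implicit Arguments. Unset Strict Implicit. Unset Printing Implicit Defensive.
Import Order.TTheory GRing.Theory Num.Theory.
Import numFieldNormedType.Exports.
Local Open Scope classical_set_scope.
Local Open Scope ring_scope.

Section NestedFractal.
Variable R : realType.
Local Notation pt := (R * R)%type.

Definition sc (c : R) (p : pt) : pt := (c * p.1, c * p.2).

Definition dotp (p q : pt) : R := p.1 * q.1 + p.2 * q.2.

Definition bisector_reflection (x y : pt) (z : pt) : pt :=
  let d := y - x in
  let m := sc 2^-1 (x + y) in
  z - sc ((2 * dotp (z - m) d) / dotp d d) d.

Definition rot (a b : R) (p : pt) : pt := (a * p.1 - b * p.2, b * p.1 + a * p.2).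

Variables (L : R) (N : nat) (nu : 'I_N -> pt).

Definition Psi (i : 'I_N) (x : pt) : pt := sc L^-1 x + nu i.

Definition fixed_points : set pt := [set x | exists i, Psi i x = x].

Definition V00 : set pt :=
  [set x | fixed_points x /\
     exists y i j, [/\ fixed_points y, y <> x, Psi i <> Psi j & Psi i x = Psi j y]].

Definition Vm1 : set pt := [set x | exists i, (Psi i @` V00) x].
Definition Em1 (x y : pt) : Prop := exists i, (Psi i @` V00) x /\ (Psi i @` V00) y.

Definition simple_nested_fractal (K : set pt) : Prop :=
  [/\ [/\ 1 < L, (2 <= N)%N & (forall i : 'I_N, val i = 0%N -> nu i = 0)],
      [/\ compact K, K !=set0 & K = [set x | exists i, (Psi i @` K) x]],
      [/\
      (exists U : set pt, [/\ open U, U !=set0,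
          (exists r : R, forall p, U p -> `|p.1| <= r /\ `|p.2| <= r),
          (forall i, Psi i @` U `<=` U) &
          (forall i j, i != j -> Psi i @` U `&` Psi j @` U = set0)]),
      (forall i j, i != j -> Psi i @` K `&` Psi j @` K = Psi i @` V00 `&` Psi j @` V00) &
      (forall x y, V00 x -> V00 y -> x <> y -> forall i, exists j,
          bisector_reflection x y @` (Psi i @` V00) = Psi j @` V00)] &
      [/\
        (forall x y, Vm1 x -> Vm1 y -> exists (n : nat) (s : nat -> pt),
           [/\ s 0%N = x, s n = y & forall m, (m < n)%N -> Em1 (s m) (s m.+1)]) &
        (exists x y z, [/\ V00 x, V00 y, V00 z & [/\ x <> y, y <> z & x <> z]]) ]].

Definition VMM (M : int) : set pt := (fun x => sc (L ^ M) x) @` V00.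

Definition Vcx (M : int) (t : pt) : set pt := (fun x => sc (L ^ M) x + t) @` V00.

Definition complex_shift (M : int) (t : pt) : Prop :=
  exists (n : nat) (w : nat -> 'I_N),
    t = \sum_(j < n.+1) sc (L ^ (M + 1 + (j : nat)%:Z)) (nu (w j)).

Definition VMM1 (M : int) : set pt :=
  [set v | exists i : 'I_N, Vcx M (sc (L ^ (M + 1)) (nu i)) v].

Definition VMinf (M : int) : set pt :=
  [set v | exists t, complex_shift M t /\ Vcx M t v].

(* Barycenter of V_M^<M> (= barycenter of K^<M>): average of its vertices,
   the essential fixed points being the points (L/(L-1)) nu_i. *)
Definition fixpt (i : 'I_N) : pt := sc (L / (L - 1)) (nu i).
Definition ess_idx : {set 'I_N} := [set i | `[< V00 (fixpt i) >]].
Definition barycenter (M : int) : pt :=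
  sc (L ^ M) (sc (#|ess_idx|%:R)^-1 (\sum_(i in ess_idx) fixpt i)).

Definition RotM (M : int) (f : pt -> pt) : Prop :=
  exists a b : R, [/\ a ^+ 2 + b ^+ 2 = 1,
    f = (fun p => barycenter M + rot a b (p - barycenter M)) &
    f @` VMM M = VMM M].

Definition bij_onto (A : finType) (V : set pt) (l : pt -> A) : Prop :=
  (forall v w, V v -> V w -> l v = l w -> v = w) /\
  (forall a : A, exists v, V v /\ l v = a).

(* Good labelling function of order M (only its values on V_M^<oo> matter). *)
Definition good_labelling (A : finType) (M : int) (l : pt -> A) : Prop :=
  bij_onto (VMM M) l /\
  forall t, complex_shift M t ->
    exists f, RotM M f /\ forall v, Vcx M t v -> l v = l (f (v - t)).

Definition good_labelling_property (A : finType) : Prop :=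
  exists (M : int) (l : pt -> A), good_labelling M l.

End NestedFractal.

From Pilot Require Import Defs.
From HB Require Import structures.
From mathcomp Require Import all_boot all_order all_algebra.
From mathcomp Require Import all_classical all_reals all_analysis.
From mathcomp Require Import ring lra.
Import Order.TTheory GRing.Theory Num.Theory.
Import numFieldNormedType.Exports.
Set Implicit Arguments. Unset Strict Implicit. Unset Printing Implicit Defensive.
Local Open Scope classical_set_scope.
Local Open Scope ring_scope.

(* A good labelling of order M' is carried to order M by the similarity
   x |-> L ^ (M - M') x and relabelled through l0; this gives the extension.
   Conversely, rescaling the given rotations to order 0 yields rotations g_i in R_0,
   one for each cell Psi_i(K) of K. Injectivity of l0 on V_M^<M> makes g_i and g_j
   agree on the vertices shared by two cells and makes the rotation of the cell
   Psi_1(K) = K / L trivial, so by nesting Psi_i(q) |-> g_i(q) is a well-defined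
   folding of K into itself. By the symmetry axiom every reflection in the
   perpendicular bisector of two essential fixed points permutes the cells and V_0;
   hence V_0 is concyclic about its barycenter, and every nontrivial rotation f of
   R_0, being a product of two such reflections, satisfies f o Psi_i = Psi_j o f
   for some j. So folding a vertex of an n-fold cell n times acts on V_0 as a single
   rotation of R_0, and labelling every vertex by l0 of its folded image is a good
   labelling of order M. *)

Section Affine.
Variables (R : numFieldType) (V : lmodType R).

Definition affine (h : V -> V) := forall p q (s : R), h (s *: p + q) = s *: (h p - h 0) + h q.

Lemma affine_sum h (I : finType) (P : pred I) (F : I -> V) : affine h ->
  h (\sum_(i | P i) F i) = \sum_(i | P i) (h (F i) - h 0) + h 0.
Proof.
move=> ha; elim/big_rec2: _ => [|i y1 y2 Pi IH]; first by rewrite add0r.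
by rewrite -[F i]scale1r ha !scale1r IH addrA.
Qed.

Lemma affine_mean h (I : finType) (P : pred I) (F : I -> V) : affine h -> (0 < #|P|)%N ->
  h ((#|P|%:R)^-1 *: \sum_(i | P i) F i) = (#|P|%:R)^-1 *: \sum_(i | P i) h (F i).
Proof.
move=> ha hP; rewrite -[_ *: _]addr0 ha affine_sum // addrK sumrB scalerBr sumr_const.
have -> : (#|P|%:R^-1 : R) *: (h 0 *+ #|P|) = h 0.
  by rewrite -scalerMnr scalerMnl -mulr_natr mulVf ?scale1r // pnatr_eq0 -lt0n.
by rewrite subrK.
Qed.

Lemma affine_comp (h g : V -> V) : affine h -> affine g -> affine (h \o g).
Proof.
move=> ah ag p q s /=; rewrite ag ah; congr (_ *: _ + _).
by have := ah (g p - g 0) (g 0) 1; rewrite !scale1r subrK => ->; rewrite addrK.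
Qed.

Lemma affine_id : affine id.
Proof. by move=> p q s; rewrite subr0. Qed.

Lemma affine_translate c : affine (fun p => p + c).
Proof. by move=> p q s /=; rewrite add0r addrK addrA. Qed.

Lemma affine_scale k : affine (fun p => k *: p).
Proof. by move=> p q s /=; rewrite scaler0 subr0 scalerDr !scalerA mulrC. Qed.

End Affine.

Lemma scaleRE (R : realType) (k a : R) : k *: a = k * a.
Proof. by []. Qed.

Ltac pt_eq := apply/pair_equal_spec; split => /=; rewrite ?scaleRE.

Section PlaneGeometry.
Variable R : realType.
Local Notation pt := (R * R)%type.
Local Notation sigma := (@bisector_reflection R).
Local Notation rot := (@Defs.rot R).

Lemma scE c (p : pt) : sc c p = c *: p.
Proof. by case: p. Qed.

Lemma dotpp_eq0 (p : pt) : (dotp p p == 0) = (p == 0).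
Proof.
case: p => p1 p2; rewrite /dotp /= -!expr2 paddr_eq0 ?sqr_ge0 // !sqrf_eq0.
by rewrite xpair_eqE.
Qed.

Lemma dotpp_neq0 (p : pt) : p != 0 -> dotp p p != 0.
Proof. by rewrite dotpp_eq0. Qed.

Definition cross (p q : pt) : R := p.1 * q.2 - p.2 * q.1.

Lemma cross_eq0_of_orthogonal (p q w : pt) :
  w != 0 -> dotp p w = 0 -> dotp q w = 0 -> cross p q = 0.
Proof.
case: p q w => [p1 p2] [q1 q2] [w1 w2]; rewrite /dotp /cross /= => + hp hq.
have h1 : w1 * (p1 * q2 - p2 * q1) = q2 * (p1 * w1 + p2 * w2) - p2 * (q1 * w1 + q2 * w2) by ring.
have h2 : w2 * (p1 * q2 - p2 * q1) = p1 * (q1 * w1 + q2 * w2) - q1 * (p1 * w1 + p2 * w2) by ring.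
rewrite hp hq !mulr0 subrr in h1 h2.
apply: contraNeq => hc; apply/eqP; pt_eq; apply: (mulIf hc); by rewrite mul0r.
Qed.

Definition sqdist (p q : pt) : R := dotp (p - q) (p - q).

Lemma sqdist_eq0 (p q : pt) : sqdist p q = 0 -> p = q.
Proof. by move/eqP; rewrite dotpp_eq0 subr_eq0 => /eqP. Qed.

Lemma sqdistC (p q : pt) : sqdist p q = sqdist q p.
Proof. by case: p q => [p1 p2] [q1 q2]; rewrite /sqdist /dotp /=; ring. Qed.

Lemma cross_eq0_parallel (a b : pt) :
  a != 0 -> cross a b = 0 -> b = (dotp a b / dotp a a) *: a.
Proof.
move=> /dotpp_neq0; case: a b => [a1 a2] [b1 b2]; rewrite /cross /dotp /= => ha hc.
pt_eq; apply/eqP; rewrite -subr_eq0; apply/eqP.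
- have -> : b1 - (a1 * b1 + a2 * b2) / (a1 * a1 + a2 * a2) * a1
      = - a2 * (a1 * b2 - a2 * b1) / (a1 * a1 + a2 * a2) by field.
  by rewrite hc mulr0 mul0r.
- have -> : b2 - (a1 * b1 + a2 * b2) / (a1 * a1 + a2 * a2) * a2
      = a1 * (a1 * b2 - a2 * b1) / (a1 * a1 + a2 * a2) by field.
  by rewrite hc mulr0 mul0r.
Qed.

Lemma sqdistB (P x z : pt) :
  sqdist z P - sqdist x P = 2 * dotp (x - P) (z - x) + dotp (z - x) (z - x).
Proof.
by case: P x z => [p1 p2] [x1 x2] [z1 z2]; rewrite /sqdist /dotp /=; ring.
Qed.

Lemma concyclic_cross_neq0 (P z1 z2 z3 : pt) :
  z1 != z2 -> z1 != z3 -> z2 != z3 ->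
  sqdist z2 P = sqdist z1 P -> sqdist z3 P = sqdist z1 P ->
  cross (z2 - z1) (z3 - z1) != 0.
Proof.
move=> n12 n13 n23 e2 e3; apply/eqP => hc.
have ha : z2 - z1 != 0 by rewrite subr_eq0 eq_sym.
have hb : z3 - z1 != 0 by rewrite subr_eq0 eq_sym.
have ea := sqdistB P z1 z2; have eb := sqdistB P z1 z3.
rewrite e2 subrr in ea; rewrite e3 subrr in eb.
have := cross_eq0_parallel ha hc; set t := _ / _; clearbody t => hbE.
have scaled_chord (a X : pt) : 2 * dotp X (t *: a) + dotp (t *: a) (t *: a)
    - t * (2 * dotp X a + dotp a a) = t * (t - 1) * dotp a a.
  by case: a X => [a1 a2] [x1 x2]; rewrite /dotp /= !scaleRE; ring.
move: (scaled_chord (z2 - z1) (z1 - P)); rewrite -hbE -ea -eb mulr0 subrr.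
move/esym/eqP; rewrite mulf_eq0 (negbTE (dotpp_neq0 ha)) orbF mulf_eq0 subr_eq0.
case/orP => /eqP ht.
  by move: hb; rewrite hbE ht scale0r eqxx.
by move: n23; rewrite -(subrK z1 z2) -(subrK z1 z3) hbE ht scale1r eqxx.
Qed.

Lemma concyclic_orthogonal_eq0 (P z1 z2 z3 w : pt) (r : R) :
  z1 != z2 -> z1 != z3 -> z2 != z3 ->
  sqdist z1 P = r -> sqdist z2 P = r -> sqdist z3 P = r ->
  dotp (z2 - z1) w = 0 -> dotp (z3 - z1) w = 0 -> w = 0.
Proof.
move=> n12 n13 n23 e1 e2 e3 h2 h3; apply/eqP; apply: contraT => hw.
have := concyclic_cross_neq0 n12 n13 n23 (etrans e2 (esym e1)) (etrans e3 (esym e1)).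
by rewrite (cross_eq0_of_orthogonal hw h2 h3) eqxx.
Qed.

(* For [P ^+ 2 + Q ^+ 2 = 1], the reflection in a line through the origin. *)
Definition lrefl (P Q : R) (w : pt) : pt := (P * w.1 + Q * w.2, Q * w.1 - P * w.2).

Definition bisector_P (x y : pt) : R :=
  ((y - x).2 * (y - x).2 - (y - x).1 * (y - x).1) / dotp (y - x) (y - x).
Definition bisector_Q (x y : pt) : R :=
  - (2 * (y - x).1 * (y - x).2) / dotp (y - x) (y - x).

Section BisectorReflection.
Variables x y : pt.
Hypothesis xy : x != y.

Let dxy : (y - x).1 * (y - x).1 + (y - x).2 * (y - x).2 != 0.
Proof. by apply: dotpp_neq0; rewrite subr_eq0 eq_sym. Qed.

Lemma bisector_reflectionB p q :
  sigma x y p - sigma x y q = lrefl (bisector_P x y) (bisector_Q x y) (p - q).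
Proof.
move: dxy; case: x y p q => [x1 x2] [y1 y2] [p1 p2] [q1 q2] /= h.
by rewrite /bisector_reflection /lrefl /bisector_P /bisector_Q /dotp /sc /=; pt_eq; field.
Qed.

Lemma bisector_reflection_l : sigma x y x = y.
Proof.
move: dxy; case: x y => [x1 x2] [y1 y2] /= h.
by rewrite /bisector_reflection /dotp /sc /=; pt_eq; field.
Qed.

Lemma bisector_reflectionK : involutive (sigma x y).
Proof.
move: dxy => + p; case: x y p => [x1 x2] [y1 y2] [p1 p2] /= h.
by rewrite /bisector_reflection /dotp /sc /=; pt_eq; field.
Qed.

Lemma bisector_reflection_inj : injective (sigma x y).
Proof. exact: inv_inj bisector_reflectionK. Qed.

Lemma bisector_reflection_imageK (A : set pt) : sigma x y @` (sigma x y @` A) = A.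
Proof.
rewrite image_comp (_ : _ \o _ = id) ?image_id //.
by apply: boolp.funext => p; apply: bisector_reflectionK.
Qed.

Lemma bisector_reflection_fixP p : sigma x y p = p <-> sqdist p x = sqdist p y.
Proof.
have -> : sigma x y p = p - ((sqdist p x - sqdist p y) / dotp (y - x) (y - x)) *: (y - x).
  move: dxy; case: x y p => [x1 x2] [y1 y2] [p1 p2] /= h.
  by rewrite /bisector_reflection /sqdist /dotp /sc /=; pt_eq; field.
split => [/eqP|->]; last by rewrite subrr mul0r scale0r subr0.
rewrite -subr_eq0 addrAC subrr add0r oppr_eq0 scaler_eq0 subr_eq0 [y == x]eq_sym (negbTE xy) orbF.
by rewrite mulf_eq0 invr_eq0 (negbTE dxy) orbF subr_eq0 => /eqP.
Qed.

End BisectorReflection.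

Lemma dotp_lrefl P Q w : dotp (lrefl P Q w) (lrefl P Q w) = (P ^+ 2 + Q ^+ 2) * dotp w w.
Proof. by case: w => w1 w2; rewrite /lrefl /dotp /=; ring. Qed.

Lemma dotp_rot a b w : dotp (rot a b w) (rot a b w) = (a ^+ 2 + b ^+ 2) * dotp w w.
Proof. by case: w => w1 w2; rewrite /rot /dotp /=; ring. Qed.

Lemma rotB a b (p q : pt) : rot a b (p - q) = rot a b p - rot a b q.
Proof. by case: p q => [p1 p2] [q1 q2]; rewrite /rot /=; pt_eq; ring. Qed.

Lemma rotZ a b k (p : pt) : rot a b (k *: p) = k *: rot a b p.
Proof. by case: p => p1 p2; rewrite /rot /=; pt_eq; ring. Qed.

Lemma lreflZ P Q k (p : pt) : lrefl P Q (k *: p) = k *: lrefl P Q p.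
Proof. by case: p => p1 p2; rewrite /lrefl /=; pt_eq; ring. Qed.

Lemma rot_lrefl a b P Q w :
  rot a b (lrefl P Q w) = lrefl (a * P - b * Q) (a * Q + b * P) w.
Proof. by case: w => w1 w2; rewrite /lrefl /rot /=; pt_eq; ring. Qed.

Lemma rot_comp a1 b1 a2 b2 w :
  rot a2 b2 (rot a1 b1 w) = rot (a2 * a1 - b2 * b1) (a2 * b1 + b2 * a1) w.
Proof. by case: w => w1 w2; rewrite /rot /=; pt_eq; ring. Qed.

Lemma rot10 w : rot 1 0 w = w.
Proof. by case: w => w1 w2; rewrite /rot /=; pt_eq; ring. Qed.

Lemma bisector_PQ_norm x y : x != y -> bisector_P x y ^+ 2 + bisector_Q x y ^+ 2 = 1.
Proof.
rewrite eq_sym -subr_eq0 => /dotpp_neq0; case: x y => [x1 x2] [y1 y2].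
by rewrite /bisector_P /bisector_Q /dotp /= => h; field.
Qed.

Lemma sqdist_bisector_reflection x y p q : x != y ->
  sqdist (sigma x y p) (sigma x y q) = sqdist p q.
Proof.
by move=> xy; rewrite /sqdist bisector_reflectionB // dotp_lrefl bisector_PQ_norm // mul1r.
Qed.

Lemma lrefl_coef_inj P Q P' Q' w : w != 0 -> lrefl P Q w = lrefl P' Q' w -> P = P' /\ Q = Q'.
Proof.
move=> /dotpp_neq0; case: w => w1 w2; rewrite /dotp /= => hw /pair_equal_spec [e1 e2].
have h1 : (P - P') * (w1 * w1 + w2 * w2) = (P * w1 + Q * w2 - (P' * w1 + Q' * w2)) * w1
    - (Q * w1 - P * w2 - (Q' * w1 - P' * w2)) * w2 by ring.
have h2 : (Q - Q') * (w1 * w1 + w2 * w2) = (P * w1 + Q * w2 - (P' * w1 + Q' * w2)) * w2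
    + (Q * w1 - P * w2 - (Q' * w1 - P' * w2)) * w1 by ring.
rewrite e1 e2 !subrr !mul0r addr0 subrr in h1 h2.
move/eqP: h1; rewrite mulf_eq0 (negbTE hw) orbF subr_eq0 => /eqP ->.
by move/eqP: h2; rewrite mulf_eq0 (negbTE hw) orbF subr_eq0 => /eqP ->.
Qed.

Lemma rot_fixed_eq0 a b w : a ^+ 2 + b ^+ 2 = 1 -> (a, b) != (1, 0) ->
  rot a b w = w -> w = 0.
Proof.
case: w => w1 w2 hn hab /pair_equal_spec [/= e1 e2].
have hd : (a - 1) ^+ 2 + b ^+ 2 != 0.
  rewrite paddr_eq0 ?sqr_ge0 // !sqrf_eq0 subr_eq0.
  by apply: contra hab => /andP[/eqP -> /eqP ->].
have h1 : ((a - 1) ^+ 2 + b ^+ 2) * w1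
    = (a - 1) * (a * w1 - b * w2 - w1) + b * (b * w1 + a * w2 - w2) by ring.
have h2 : ((a - 1) ^+ 2 + b ^+ 2) * w2
    = (a - 1) * (b * w1 + a * w2 - w2) - b * (a * w1 - b * w2 - w1) by ring.
rewrite e1 e2 !subrr !mulr0 addr0 subrr in h1 h2.
move/eqP: h1; rewrite mulf_eq0 (negbTE hd) /= => /eqP ->.
by move/eqP: h2; rewrite mulf_eq0 (negbTE hd) /= => /eqP ->.
Qed.

Lemma lrefl_fixed_line P Q : exists2 n : pt, n != 0 &
  forall w, lrefl P Q w = w -> dotp w n = 0.
Proof.
have [[-> ->]|hPQ] := eqVneq (P, Q) (1, 0).
  exists (0, 1); first by rewrite xpair_eqE oner_eq0 andbF.
  case=> w1 w2 /pair_equal_spec [_ /= e2]; rewrite /dotp /=.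
  have : 2 * w2 = 0 by lra.
  by move/eqP; rewrite mulf_eq0 pnatr_eq0 /= => /eqP ->; ring.
exists (P - 1, Q); first by rewrite xpair_eqE subr_eq0 -xpair_eqE.
by case=> w1 w2 /pair_equal_spec [/= e1 _]; rewrite /dotp /=; nra.
Qed.

Definition rot_about (c : pt) (a b : R) (p : pt) : pt := c + rot a b (p - c).

Lemma affine_bisector_reflection x y : x != y -> affine (sigma x y).
Proof.
move=> xy p q s; rewrite -[LHS](subrK (sigma x y q)) !bisector_reflectionB //.
by rewrite addrK subr0 lreflZ.
Qed.

Lemma affine_rot_about (c : pt) (a b : R) : affine (rot_about c a b).
Proof.
move=> [p1 p2] [q1 q2] s; case: c => c1 c2.
by rewrite /rot_about /Defs.rot /=; pt_eq; ring.
Qed.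

Lemma rot_about_inj (c : pt) (a b : R) : a ^+ 2 + b ^+ 2 = 1 -> injective (rot_about c a b).
Proof.
move=> hab p q /addrI /eqP; rewrite -subr_eq0 -rotB opprB addrA subrK -dotpp_eq0.
by rewrite dotp_rot hab mul1r dotpp_eq0 subr_eq0 => /eqP.
Qed.

Lemma rot_about10 (c : pt) : rot_about c 1 0 = id.
Proof. by apply: boolp.funext => p; rewrite /rot_about rot10 addrC subrK. Qed.

End PlaneGeometry.

Section ConcyclicReflections.
Variable R : realType.
Local Notation pt := (R * R)%type.
Local Notation sigma := (@bisector_reflection R).
Local Notation rot := (@Defs.rot R).
Variables (V : set pt) (c : pt) (r : R).
Hypothesis V_circle : forall x, V x -> sqdist x c = r.
Hypothesis V_three : exists z1 z2 z3,
  [/\ V z1, V z2, V z3 & [/\ z1 != z2, z1 != z3 & z2 != z3]].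

Lemma concyclic_neq_center x : V x -> x != c.
Proof.
move=> hx; have [z1 [z2 [z3 [h1 h2 _ [n12 _ _]]]]] := V_three.
apply: contra n12 => /eqP xc.
have hr : r = 0 by rewrite -(V_circle hx) xc /sqdist subrr /dotp /= mulr0 addr0.
have := V_circle h1; have := V_circle h2; rewrite hr => /sqdist_eq0 -> /sqdist_eq0 ->.
exact: eqxx.
Qed.

Lemma bisector_reflection_center x y : V x -> V y -> x != y -> sigma x y c = c.
Proof.
by move=> hx hy xy; apply/bisector_reflection_fixP => //; rewrite sqdistC V_circle // sqdistC V_circle.
Qed.

Lemma bisector_reflection_about x y p : V x -> V y -> x != y ->
  sigma x y p = c + lrefl (bisector_P x y) (bisector_Q x y) (p - c).
Proof.
move=> hx hy xy.
by rewrite -bisector_reflectionB // bisector_reflection_center // addrC subrK.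
Qed.

Lemma lrefl_about_moves P Q : exists2 u, V u & c + lrefl P Q (u - c) != u.
Proof.
have [n n0 hn] := lrefl_fixed_line P Q.
apply: boolp.contrapT => hfix; move/negP: n0; apply.
have fixed z : V z -> dotp (z - c) n = 0.
  move=> hz; apply: hn; apply/(addrI c); rewrite [c + (z - c)]addrC subrK.
  by apply: boolp.contrapT => /eqP hz'; apply: hfix; exists z.
have [z1 [z2 [z3 [h1 h2 h3 [n12 n13 n23]]]]] := V_three.
have chord z : V z -> dotp (z - z1) n = 0.
  move=> hz; have := fixed _ hz; have := fixed _ h1.
  move: (z) (z1) (c) (n) => [a1 a2] [b1 b2] [c1 c2] [m1 m2]; rewrite /dotp /=; lra.
apply/eqP; exact: (concyclic_orthogonal_eq0 n12 n13 n23 (V_circle h1) (V_circle h2)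
  (V_circle h3) (chord _ h2) (chord _ h3)).
Qed.

Lemma concyclic_translate_eq0 e : (forall z, V z -> sqdist (z - e) c = r) -> e = 0.
Proof.
move=> Ve; have [z1 [z2 [z3 [h1 h2 h3 [n12 n13 n23]]]]] := V_three.
have chord z : V z -> dotp (z - z1) e = 0.
  move=> hz; have -> : dotp (z - z1) e = 2^-1 * ((sqdist z c - sqdist (z - e) c)
      - (sqdist z1 c - sqdist (z1 - e) c)).
    move: (z) (z1) (e) (c) => [a1 a2] [b1 b2] [e1 e2] [c1 c2].
    by rewrite /sqdist /dotp /=; field.
  by rewrite (V_circle hz) (Ve _ hz) (V_circle h1) (Ve _ h1) !subrr mulr0.
exact: (concyclic_orthogonal_eq0 n12 n13 n23 (V_circle h1) (V_circle h2) (V_circle h3)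
  (chord _ h2) (chord _ h3)).
Qed.

Hypothesis V_bisector_reflection : forall x y, V x -> V y -> x != y ->
  forall z, V z -> V (sigma x y z).

Lemma rot_about_bisector_reflections a b :
  a ^+ 2 + b ^+ 2 = 1 -> (a, b) != (1, 0) ->
  (forall z, V z -> V (rot_about c a b z)) ->
  exists x y u v, [/\ V x, V y, V u, V v & [/\ x != y, u != v &
    rot_about c a b = sigma u v \o sigma x y]].
Proof.
move=> hab hne gV.
have [z1 [_ [_ [h1 _ _ _]]]] := V_three.
set g := rot_about c a b.
set y := g z1; have hy : V y by apply: gV.
have z1y : z1 != y.
  apply: contra (concyclic_neq_center h1) => /eqP ey.
  have : rot a b (z1 - c) = z1 - c.
    by apply/(addrI c); rewrite -/(rot_about c a b z1) -/g -/y -ey addrC subrK.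
  by move/(rot_fixed_eq0 hab hne)/eqP; rewrite subr_eq0.
pose P' := a * bisector_P z1 y - b * bisector_Q z1 y.
pose Q' := a * bisector_Q z1 y + b * bisector_P z1 y.
have gS p : g (sigma z1 y p) = c + lrefl P' Q' (p - c).
  rewrite /g /rot_about bisector_reflection_about //.
  by rewrite [c + lrefl _ _ _ - c]addrAC subrr add0r rot_lrefl.
have [u hu hmoves] := lrefl_about_moves P' Q'.
rewrite -gS in hmoves; set v := g (sigma z1 y u) in hmoves.
have hv : V v by apply/gV/V_bisector_reflection.
have uv : u != v by rewrite eq_sym.
have [eP eQ] : P' = bisector_P u v /\ Q' = bisector_Q u v.
  apply: (lrefl_coef_inj (w := u - c)); first by rewrite subr_eq0 concyclic_neq_center.
  apply: (addrI c); rewrite -gS -/v -bisector_reflection_about //.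
  by rewrite bisector_reflection_l.
exists z1, y, u, v; split => //; split => //.
apply: boolp.funext => p /=.
by rewrite -[p in LHS](bisector_reflectionK z1y) gS eP eQ -bisector_reflection_about.
Qed.

End ConcyclicReflections.

Section Fractal.
Variables (R : realType) (L : R) (N : nat) (nu : 'I_N -> (R * R)%type).
Local Notation pt := (R * R)%type.
Local Notation sigma := (@bisector_reflection R).
Local Notation rot := (@Defs.rot R).
Local Notation Psi := (Psi L nu).
Local Notation V0 := (V00 L nu).
Local Notation E := (ess_idx L nu).
Local Notation fixpt := (fixpt L nu).
Local Notation b0 := (barycenter L nu 0).

Hypothesis L_gt1 : 1 < L.
Hypothesis nu_inj : injective nu.
Hypothesis V0_symmetric : forall x y, V0 x -> V0 y -> x <> y ->
  forall i, exists j, sigma x y @` (Psi i @` V0) = Psi j @` V0.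
Hypothesis V0_three : exists x y z, [/\ V0 x, V0 y, V0 z & [/\ x <> y, y <> z & x <> z]].

Lemma L_neq0 : L != 0.
Proof. by rewrite gt_eqF // (lt_trans ltr01). Qed.

Lemma PsiE i x : Psi i x = L^-1 *: x + nu i.
Proof. by rewrite /Defs.Psi scE. Qed.

Lemma PsiK i x : L *: (Psi i x - nu i) = x.
Proof. by rewrite PsiE addrK scalerA mulfV ?L_neq0 // scale1r. Qed.

Lemma PsiKV i x : Psi i (L *: (x - nu i)) = x.
Proof. by rewrite PsiE scalerA mulVf ?L_neq0 // scale1r subrK. Qed.

Lemma Psi_inj i : injective (Psi i).
Proof. by move=> x y e; rewrite -(PsiK i x) e PsiK. Qed.

Lemma PsiB i p q : Psi i p - Psi i q = L^-1 *: (p - q).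
Proof. by rewrite !PsiE opprD addrACA subrr addr0 scalerBr. Qed.

Lemma affine_Psi i : affine (Psi i).
Proof.
by move=> p q s; rewrite !PsiE scalerDr scaler0 add0r addrK addrA scalerA mulrC -scalerA.
Qed.

Lemma Psi_fixP i x : Psi i x = x <-> x = fixpt i.
Proof.
have L1 : L - 1 != 0 by rewrite subr_eq0 gt_eqF.
rewrite PsiE /Defs.fixpt scE; split => [h|->].
  have : (1 - L^-1) *: x = nu i by rewrite scalerBl scale1r -{1}h addrAC subrr add0r.
  move/(congr1 (fun p => (L / (L - 1)) *: p)); rewrite scalerA => <-.
  by rewrite [_ * _](_ : _ = 1) ?scale1r //; field; rewrite L1 L_neq0.
rewrite scalerA -{2}[nu i]scale1r -scalerDl; congr (_ *: _).
by field; rewrite L1 L_neq0.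
Qed.

Lemma fixpt_inj : injective fixpt.
Proof.
have c0 : L / (L - 1) != 0 by rewrite mulf_neq0 ?invr_eq0 ?L_neq0 // subr_eq0 gt_eqF.
by move=> i j; rewrite /Defs.fixpt !scE => /(scalerI c0)/nu_inj.
Qed.

Lemma V00_fixpt x : V0 x -> exists2 i, i \in E & x = fixpt i.
Proof.
move=> hx; have [[i /Psi_fixP xE] _] := hx.
by exists i => //; rewrite inE; apply/asboolP; rewrite -xE.
Qed.

Lemma ess_idx_V00 i : i \in E -> V0 (fixpt i).
Proof. by rewrite inE => /asboolP. Qed.

Lemma V00_three : exists z1 z2 z3,
  [/\ V0 z1, V0 z2, V0 z3 & [/\ z1 != z2, z1 != z3 & z2 != z3]].
Proof.
have [x [y [z [hx hy hz [hxy hyz hxz]]]]] := V0_three.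
by exists x, y, z; split => //; split; apply/eqP.
Qed.

Lemma ess_idx_gt0 : (0 < #|E|)%N.
Proof.
have [z [_ [_ [hz _ _ _]]]] := V00_three; have [i hi _] := V00_fixpt hz.
by apply/card_gt0P; exists i.
Qed.

Lemma barycenter0E : b0 = (#|E|%:R)^-1 *: \sum_(i in E) fixpt i.
Proof. by rewrite /barycenter expr0z !scE scale1r. Qed.

Lemma barycenter_fixed h : affine h -> injective h -> h @` V0 = V0 -> h b0 = b0.
Proof.
move=> ha hi hV; rewrite barycenter0E affine_mean ?ess_idx_gt0 //; congr (_ *: _).
rewrite -!big_enum /= -[RHS](big_map fixpt xpredT id) -[LHS](big_map (h \o fixpt) xpredT id).
apply: perm_big; apply: uniq_perm.
- by rewrite map_inj_uniq ?enum_uniq // => i j /hi/fixpt_inj.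
- by rewrite map_inj_uniq ?enum_uniq //; apply: fixpt_inj.
move=> p; apply/mapP/mapP => -[i]; rewrite mem_enum => hi' -> /=.
  have : (h @` V0) (h (fixpt i)) by exists (fixpt i) => //; apply: ess_idx_V00.
  by rewrite hV => /V00_fixpt [j hj ->]; exists j; rewrite ?mem_enum.
have : V0 (fixpt i) by apply: ess_idx_V00.
rewrite -hV => -[x /V00_fixpt [j hj ->] <-].
by exists j; rewrite ?mem_enum.
Qed.

Definition cell_pullback (h : pt -> pt) (i j : 'I_N) (p : pt) : pt :=
  L *: (h (Psi i p) - nu j).

Lemma Psi_cell_pullback h i j p : Psi j (cell_pullback h i j p) = h (Psi i p).
Proof. exact: PsiKV. Qed.

Lemma affine_cell_pullback h i j : affine h -> affine (cell_pullback h i j).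
Proof.
move=> ah; rewrite (_ : cell_pullback h i j = (fun p => L *: p) \o (fun p => p + - nu j) \o h \o Psi i) //.
apply/affine_comp/affine_Psi/affine_comp => //.
exact/affine_comp/affine_translate/affine_scale.
Qed.

Lemma cell_pullback_inj h i j : injective h -> injective (cell_pullback h i j).
Proof. by move=> hi p q /(congr1 (Psi j)); rewrite !Psi_cell_pullback => /hi/Psi_inj. Qed.

Lemma cell_pullback_image h i j : h @` (Psi i @` V0) = Psi j @` V0 ->
  cell_pullback h i j @` V0 = V0.
Proof.
move=> e; apply/seteqP; split => [_ [x hx <-]|x hx].
  have : (h @` (Psi i @` V0)) (h (Psi i x)) by exists (Psi i x) => //; exists x.
  by rewrite e => -[y hy ey]; rewrite /cell_pullback -ey PsiK.
have : (Psi j @` V0) (Psi j x) by exists x.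
rewrite -e => -[_ [y hy <-] ey]; exists y => //.
by rewrite /cell_pullback ey PsiK.
Qed.

Lemma cell_barycenter h i j : affine h -> injective h ->
  h @` (Psi i @` V0) = Psi j @` V0 -> h (Psi i b0) = Psi j b0.
Proof.
move=> ah hi e; rewrite -(Psi_cell_pullback h i j) barycenter_fixed //.
- exact: affine_cell_pullback.
- exact: cell_pullback_inj.
- exact: cell_pullback_image.
Qed.

Lemma cell_inj i j : Psi i @` V0 = Psi j @` V0 -> i = j.
Proof.
move=> e; have := @cell_barycenter id i j (@affine_id _ _) (@inj_id _).
by rewrite image_id => /(_ e); rewrite !PsiE => /addrI/nu_inj.
Qed.

Lemma bisector_reflection_cell x y i : V0 x -> V0 y -> x != y ->
  exists j, sigma x y @` (Psi i @` V0) = Psi j @` V0.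
Proof. by move=> hx hy /eqP xy; apply: V0_symmetric. Qed.

Definition cells_barycenter : pt := (#|'I_N|%:R)^-1 *: \sum_(i : 'I_N) Psi i b0.

(* The reflection permutes the 1-cells, hence their barycenters. *)
Lemma bisector_reflection_cells_barycenter x y : V0 x -> V0 y -> x != y ->
  sigma x y cells_barycenter = cells_barycenter.
Proof.
move=> hx hy xy.
have [perm hperm] := boolp.choice (fun i => bisector_reflection_cell i hx hy xy).
have perm_inj : injective perm.
  move=> i i' e; apply: cell_inj.
  rewrite -(bisector_reflection_imageK xy (Psi i @` V0)) hperm e -hperm.
  exact: bisector_reflection_imageK.
have N_gt0 : (0 < #|'I_N|)%N := leq_trans ess_idx_gt0 (max_card _).
rewrite /cells_barycenter affine_mean; [|exact: affine_bisector_reflection|exact: N_gt0].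
congr (_ *: _); rewrite [RHS](reindex_inj perm_inj); apply: eq_bigr => i _.
by rewrite (cell_barycenter (affine_bisector_reflection xy) (bisector_reflection_inj xy) (hperm i)).
Qed.

Lemma V00_concyclic_about c : (forall x y, V0 x -> V0 y -> x != y -> sigma x y c = c) ->
  exists r, forall x, V0 x -> sqdist x c = r.
Proof.
move=> sigma_c; have [z [_ [_ [hz _ _ _]]]] := V00_three.
exists (sqdist z c) => x hx; have [-> //|xz] := eqVneq x z.
by have /bisector_reflection_fixP := sigma_c _ _ hx hz xz; rewrite !(sqdistC c) => ->.
Qed.

(* [sigma x y] and its pullback [f] to a pair of 1-cells differ by a translation [e];
   as [f] maps [V0] into [V0], both [sigma x y @` V0] and its translate by [- e] lie
   on the circle through [V0], which forces [e = 0]. *)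
Lemma bisector_reflection_V00 x y : V0 x -> V0 y -> x != y ->
  forall z, V0 z -> V0 (sigma x y z).
Proof.
move=> hx hy xy; have [z1 [z2 [z3 [h1 h2 h3 [n12 n13 n23]]]]] := V00_three.
have [i _ _] := V00_fixpt h1; have [j hj] := bisector_reflection_cell i hx hy xy.
set f := cell_pullback (sigma x y) i j.
have fV z : V0 z -> V0 (f z) by move=> hz; rewrite -(cell_pullback_image hj); exists z.
set e := sigma x y z1 - f z1.
have fB p q : f p - f q = sigma x y p - sigma x y q.
  rewrite /f /cell_pullback -scalerBr opprD addrACA subrr addr0 !bisector_reflectionB //.
  by rewrite PsiB lreflZ scalerA mulfV ?L_neq0 // scale1r.
have fE z : f z = sigma x y z - e.
  move: (fB z z1); rewrite /e; move: (f z) (f z1) (sigma x y z) (sigma x y z1) => a b c d h.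
  by rewrite opprB addrA addrAC -h subrK.
have [r hr] := V00_concyclic_about bisector_reflection_cells_barycenter.
pose W := sigma x y @` V0.
have W_circle w : W w -> sqdist w cells_barycenter = r.
  move=> [z hz <-]; rewrite -(bisector_reflection_cells_barycenter hx hy xy).
  by rewrite sqdist_bisector_reflection // hr.
have W_three : exists w1 w2 w3, [/\ W w1, W w2, W w3 & [/\ w1 != w2, w1 != w3 & w2 != w3]].
  exists (sigma x y z1), (sigma x y z2), (sigma x y z3).
  by split; [exists z1|exists z2|exists z3|rewrite !(inj_eq (bisector_reflection_inj xy))].
have e0 : e = 0.
  apply: (concyclic_translate_eq0 W_circle W_three) => _ [z hz <-].
  by rewrite -fE; apply/hr/fV.
by move=> z /fV; rewrite fE e0 subr0.
Qed.

Lemma bisector_reflection_V00_image x y : V0 x -> V0 y -> x != y -> sigma x y @` V0 = V0.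
Proof.
move=> hx hy xy; apply/seteqP; split => [_ [z hz <-]|z hz].
  exact: bisector_reflection_V00.
by exists (sigma x y z); [apply: bisector_reflection_V00 | apply: bisector_reflectionK].
Qed.

Lemma bisector_reflection_barycenter x y : V0 x -> V0 y -> x != y -> sigma x y b0 = b0.
Proof.
move=> hx hy xy; apply: barycenter_fixed.
- exact: affine_bisector_reflection.
- exact: bisector_reflection_inj.
- exact: bisector_reflection_V00_image.
Qed.

Lemma V00_concyclic : exists r, forall x, V0 x -> sqdist x b0 = r.
Proof. exact/V00_concyclic_about/bisector_reflection_barycenter. Qed.

Lemma VMM0 : VMM L nu 0 = V0.
Proof.
apply/seteqP; split => [_ [x hx <-]|x hx]; first by rewrite expr0z scE scale1r.
by exists x => //; rewrite expr0z scE scale1r.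
Qed.

Lemma RotM0P f : RotM L nu 0 f <->
  exists a b, [/\ a ^+ 2 + b ^+ 2 = 1, f = rot_about b0 a b & f @` V0 = V0].
Proof. by rewrite /RotM VMM0. Qed.

Lemma RotM0_V00 f x : RotM L nu 0 f -> V0 x -> V0 (f x).
Proof. by case/RotM0P => a [b [_ _ himg]] hx; rewrite -himg; exists x. Qed.

Lemma RotM0_cell_image f i : RotM L nu 0 f -> exists j, f @` (Psi i @` V0) = Psi j @` V0.
Proof.
case/RotM0P => a [b [hab -> himg]].
have [[-> ->]|hne] := eqVneq (a, b) (1, 0); first by exists i; rewrite rot_about10 image_id.
have [r hr] := V00_concyclic.
have gV z : V0 z -> V0 (rot_about b0 a b z) by move=> hz; rewrite -himg; exists z.
have [x [y [u [v [hx hy hu hv [xy uv ->]]]]]] :=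
  rot_about_bisector_reflections hr V00_three bisector_reflection_V00 hab hne gV.
have [k hk] := bisector_reflection_cell i hx hy xy.
have [j hj] := bisector_reflection_cell k hu hv uv.
by exists j; rewrite -image_comp hk hj.
Qed.

(* The pullback of [f] has the linear part of [f] and, preserving [V0], fixes [b0]:
   it is [f] itself. *)
Lemma RotM0_cell f i : RotM L nu 0 f -> exists j, forall p, f (Psi i p) = Psi j (f p).
Proof.
move=> hf; have [j hj] := RotM0_cell_image i hf; exists j => p.
case/RotM0P: hf hj => a [b [hab -> _]] hj.
set g := cell_pullback (rot_about b0 a b) i j.
have gB q : g q - g b0 = rot a b (q - b0).
  rewrite /g /cell_pullback -scalerBr opprD addrACA subrr addr0 /rot_about.
  rewrite opprD addrACA subrr add0r -rotB opprB addrA subrK PsiB rotZ.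
  by rewrite scalerA mulfV ?L_neq0 // scale1r.
have gb0 : g b0 = b0.
  apply: barycenter_fixed; first exact/affine_cell_pullback/affine_rot_about.
    exact/cell_pullback_inj/rot_about_inj.
  exact: cell_pullback_image.
by rewrite -(Psi_cell_pullback _ i j) -/g -(subrK (g b0) (g p)) gB gb0 addrC.
Qed.

Lemma RotM0_id : RotM L nu 0 id.
Proof.
apply/RotM0P; exists 1, 0; split; last exact: image_id.
  by rewrite expr1n expr0n addr0.
by rewrite rot_about10.
Qed.

Lemma RotM0_comp f g : RotM L nu 0 f -> RotM L nu 0 g -> RotM L nu 0 (g \o f).
Proof.
case/RotM0P => a1 [b1 [h1 -> i1]] /RotM0P [a2 [b2 [h2 -> i2]]].
apply/RotM0P; exists (a2 * a1 - b2 * b1), (a2 * b1 + b2 * a1); split.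
- rewrite -[1](mulr1 1) -{1}h1 -h2; ring.
- apply: boolp.funext => p; rewrite /= /rot_about.
  by rewrite [b0 + rot a1 b1 _ - b0]addrAC subrr add0r rot_comp.
- by rewrite -image_comp i1 i2.
Qed.

Lemma RotM0_fix_id f x : RotM L nu 0 f -> V0 x -> f x = x -> f =1 id.
Proof.
case/RotM0P => a [b [hab -> _]] hx fx.
have [[-> ->]|hne] := eqVneq (a, b) (1, 0); first by rewrite rot_about10.
have [r hr] := V00_concyclic.
move/negP: (concyclic_neq_center hr V00_three hx); case; rewrite -subr_eq0.
apply/eqP/(rot_fixed_eq0 hab hne)/(addrI b0).
by rewrite -[in RHS]fx /rot_about [b0 + rot a b _ - b0]addrAC subrr add0r.
Qed.

Fixpoint Psi_word (w : nat -> 'I_N) (n : nat) (z : pt) : pt :=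
  if n is n'.+1 then Psi (w n') (Psi_word w n' z) else z.

Lemma eq_Psi_word w w' n z : (forall k, (k < n)%N -> w k = w' k) ->
  Psi_word w n z = Psi_word w' n z.
Proof.
elim: n => [//|n IH] h /=.
by rewrite h // IH // => k hk; apply/h/ltnW.
Qed.

Lemma Psi_word_rcons w n i z : Psi i (Psi_word w n z) =
  Psi_word (fun k => if k == n then i else w k) n.+1 z.
Proof.
by rewrite /= eqxx; congr (Psi i _); apply: eq_Psi_word => k /ltn_eqF ->.
Qed.

Lemma RotM0_Psi_word f n w : RotM L nu 0 f ->
  exists w', forall z, f (Psi_word w n z) = Psi_word w' n (f z).
Proof.
move=> hf; elim: n w => [|n IH] w; first by exists w.
have [j hj] := RotM0_cell (w n) hf; have [w' hw'] := IH w.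
by exists (fun k => if k == n then j else w' k) => z; rewrite /= hj hw' Psi_word_rcons.
Qed.

Variable K : set pt.
Hypothesis K_attractor : K = [set x | exists i, (Psi i @` K) x].
Hypothesis K_nesting : forall i j, i != j ->
  Psi i @` K `&` Psi j @` K = Psi i @` V0 `&` Psi j @` V0.

Lemma V00_sub_K x : V0 x -> K x.
Proof.
move=> hx; have [hfx [y [i [j [hfy yx ij e]]]]] := hx.
have hij : i != j by apply: contra_notN ij => /eqP ->.
have hy : V0 y.
  by split => //; exists x, j, i; split => // [xy|ji]; [apply: yx | apply: ij].
have : (Psi i @` V0 `&` Psi j @` V0) (Psi i x) by split; [exists x | exists y].
by rewrite -(K_nesting hij) => -[[k hk /Psi_inj <-] _].
Qed.

Lemma Psi_word_K w n z : V0 z -> K (Psi_word w n z).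
Proof.
move=> hz; elim: n => [|n IH] /=; first exact: V00_sub_K.
by rewrite K_attractor; exists (w n); exists (Psi_word w n z).
Qed.

Section Folding.
Variable g : 'I_N -> pt -> pt.
Hypothesis g_rot : forall i, RotM L nu 0 (g i).
Hypothesis g_consistent : forall i j x y, V0 x -> V0 y -> Psi i x = Psi j y -> g i x = g j y.
Variable i0 : 'I_N.
Hypothesis nu_i0 : nu i0 = 0.
Hypothesis g_i0 : g i0 =1 id.

(* Points outside the cells of [K] are left fixed; inside [K] the choice of the
   cell is irrelevant by nesting and [g_consistent]. *)
Definition fold (p : pt) : pt :=
  match pselect (exists iq : 'I_N * pt, K iq.2 /\ p = Psi iq.1 iq.2) with
  | left H => let iq := projT1 (cid H) in g iq.1 iq.2
  | right _ => p
  end.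

Lemma foldE i q : K q -> fold (Psi i q) = g i q.
Proof.
move=> hq; rewrite /fold; case: pselect => [H|[]]; last by exists (i, q).
case: (cid H) => -[j q'] /= [hq' e].
have [ji|ij] := eqVneq i j; first by subst j; rewrite (Psi_inj e).
have : (Psi i @` K `&` Psi j @` K) (Psi i q) by split; [exists q | exists q'].
rewrite (K_nesting ij) => -[[x hx /Psi_inj xq] [y hy ey]].
have yq' : y = q' by apply: (@Psi_inj j); rewrite ey e.
by rewrite -xq -yq'; apply/esym/g_consistent => //; rewrite ey xq.
Qed.

Lemma iter_fold_Psi_word n w : exists2 f, RotM L nu 0 f &
  forall z, V0 z -> iter n fold (Psi_word w n z) = f z.
Proof.
elim: n w => [|n IH] w; first by exists id => //; apply: RotM0_id.
have [w' hw'] := RotM0_Psi_word n w (g_rot (w n)).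
have [f hf ef] := IH w'.
exists (f \o g (w n)); first exact: RotM0_comp.
move=> z hz; rewrite iterSr /= foldE; last exact: Psi_word_K.
by rewrite hw' ef //; apply: RotM0_V00.
Qed.

Definition cell_vertex (m : nat) (u : pt) := exists w z, V0 z /\ u = Psi_word w m z.

Lemma fold_shrink m u : cell_vertex m u ->
  cell_vertex m.+1 (L^-1 *: u) /\ iter m.+1 fold (L^-1 *: u) = iter m fold u.
Proof.
move=> [w [z [hz ->]]].
have e : L^-1 *: Psi_word w m z = Psi i0 (Psi_word w m z) by rewrite PsiE nu_i0 addr0.
split; first by exists (fun k => if k == m then i0 else w k), z; rewrite e Psi_word_rcons.
by rewrite iterSr /= e foldE ?g_i0 //; apply: Psi_word_K.
Qed.

Lemma iter_fold_shrink m k u : cell_vertex m u ->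
  iter (m + k) fold ((L^-1) ^+ k *: u) = iter m fold u.
Proof.
move=> hu; suff : cell_vertex (m + k) ((L^-1) ^+ k *: u) /\
    iter (m + k) fold ((L^-1) ^+ k *: u) = iter m fold u by case.
elim: k => [|k [hk IH]]; first by rewrite addn0 expr0 scale1r.
by rewrite exprS -scalerA addnS; have [hk' ->] := fold_shrink hk.
Qed.

End Folding.

Lemma LzD (m n : int) : L ^ (m + n) = L ^ m * L ^ n.
Proof. by rewrite expfzDr ?L_neq0. Qed.

Lemma Lz_neq0 (m : int) : L ^ m != 0.
Proof. by rewrite expfz_neq0 ?L_neq0. Qed.

Lemma scaleLzK (m : int) : cancel (fun p : pt => L ^ m *: p) (fun p => (L ^ m)^-1 *: p).
Proof. by move=> p; rewrite scalerA mulVf ?Lz_neq0 // scale1r. Qed.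

Lemma scaleLzVK (m : int) : cancel (fun p : pt => (L ^ m)^-1 *: p) (fun p => L ^ m *: p).
Proof. by move=> p; rewrite scalerA mulfV ?Lz_neq0 // scale1r. Qed.

Lemma VMMP M x : VMM L nu M x <-> exists2 z, V0 z & x = L ^ M *: z.
Proof. by split => [[z hz <-]|[z hz ->]]; exists z; rewrite ?scE. Qed.

Lemma VcxP M t v : Vcx L nu M t v <-> exists2 z, V0 z & v = L ^ M *: z + t.
Proof. by split => [[z hz <-]|[z hz ->]]; exists z; rewrite ?scE. Qed.

Lemma barycenterE M : barycenter L nu M = L ^ M *: b0.
Proof. by rewrite /barycenter !scE expr0z scale1r. Qed.

Definition rescale (m : int) (f : pt -> pt) (p : pt) : pt := L ^ m *: f ((L ^ m)^-1 *: p).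

Lemma RotM_rescale M m f : RotM L nu M f -> RotM L nu (M + m) (rescale m f).
Proof.
move=> [a [b [hab ef himg]]]; exists a, b; split => //.
  apply: boolp.funext => p; rewrite /rescale ef (barycenterE M) (barycenterE (M + m)).
  rewrite LzD mulrC -scalerA.
  by rewrite scalerDr -rotZ scalerBr scaleLzVK.
have scaleM z : L ^ (M + m) *: z = L ^ m *: (L ^ M *: z) by rewrite scalerA -LzD addrC.
apply/seteqP; split => [_ [_ /VMMP [z hz ->] <-]|_ /VMMP [z hz ->]].
  rewrite /rescale scaleM scaleLzK.
  have : (f @` VMM L nu M) (f (L ^ M *: z)) by exists (L ^ M *: z) => //; apply/VMMP; exists z.
  by rewrite himg => /VMMP [z' hz' ->]; apply/VMMP; exists z'; rewrite ?scaleM.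
have : VMM L nu M (L ^ M *: z) by apply/VMMP; exists z.
rewrite -himg => -[_ /VMMP [z' hz' ->] ex].
exists (L ^ (M + m) *: z'); first by apply/VMMP; exists z'.
by rewrite /rescale scaleM scaleLzK ex scaleM.
Qed.

Lemma Psi_word_scale w n z : L ^+ n *: Psi_word w n z = z + \sum_(j < n) L ^+ j.+1 *: nu (w j).
Proof.
elim: n => [|n IH] /=; first by rewrite expr0 scale1r big_ord0 addr0.
rewrite big_ord_recr /= addrA -IH PsiE scalerDr; congr (_ + _).
by rewrite scalerA exprSr -mulrA mulfV ?L_neq0 // mulr1.
Qed.

Section Labelling.
Variables (A : finType) (M : int) (l0 lt : pt -> A) (gM : 'I_N -> pt -> pt).
Hypothesis l0_bij : bij_onto (VMM L nu M) l0.
Hypothesis lt_l0 : forall v, VMM L nu M v -> lt v = l0 v.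
Hypothesis gM_rot : forall i, RotM L nu M (gM i).
Hypothesis gM_label : forall i v, Vcx L nu M (sc (L ^ (M + 1)) (nu i)) v ->
  lt (gM i (v - sc (L ^ (M + 1)) (nu i))) = lt v.
Variable i0 : 'I_N.
Hypothesis nu_i0 : nu i0 = 0.

Let rot0 i := rescale (- M) (gM i).

Lemma rot0_RotM0 i : RotM L nu 0 (rot0 i).
Proof. by have := RotM_rescale (- M) (gM_rot i); rewrite subrr. Qed.

Lemma rot0E i x : L ^ M *: rot0 i x = gM i (L ^ M *: x).
Proof. by rewrite /rot0 /rescale scalerA -LzD subrr expr0z scale1r invr_expz opprK. Qed.

Lemma VMM_scale x : V0 x -> VMM L nu M (L ^ M *: x).
Proof. by move=> hx; apply/VMMP; exists x. Qed.

Lemma gM_VMM i x : V0 x -> VMM L nu M (gM i (L ^ M *: x)).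
Proof. by move=> hx; rewrite -rot0E; apply/VMM_scale/RotM0_V00 => //; apply: rot0_RotM0. Qed.

Lemma lt_inj_VMM p q : VMM L nu M p -> VMM L nu M q -> lt p = lt q -> p = q.
Proof. by move=> hp hq; rewrite !lt_l0 //; apply: l0_bij.1. Qed.

Lemma gM_label_V00 i x : V0 x -> lt (gM i (L ^ M *: x)) = lt (L ^ (M + 1) *: Psi i x).
Proof.
move=> hx; have tE : sc (L ^ (M + 1)) (nu i) = L ^ (M + 1) *: nu i by rewrite scE.
have hv : Vcx L nu M (sc (L ^ (M + 1)) (nu i)) (L ^ M *: x + sc (L ^ (M + 1)) (nu i)).
  by apply/VcxP; exists x.
rewrite -[in LHS](addrK (sc (L ^ (M + 1)) (nu i)) (L ^ M *: x)) gM_label // tE PsiE.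
by rewrite scalerDr scalerA LzD expr1z mulfK ?L_neq0.
Qed.

Lemma rot0_consistent i j x y : V0 x -> V0 y -> Psi i x = Psi j y -> rot0 i x = rot0 j y.
Proof.
move=> hx hy e; apply: (scalerI (Lz_neq0 M)); rewrite !rot0E.
apply: lt_inj_VMM; [exact: gM_VMM | exact: gM_VMM |].
by rewrite !gM_label_V00 // e.
Qed.

Lemma rot0_i0 : rot0 i0 =1 id.
Proof.
have [z [_ [_ [hz _ _ _]]]] := V00_three.
apply: (RotM0_fix_id (rot0_RotM0 i0) hz); apply: (scalerI (Lz_neq0 M)); rewrite rot0E.
apply: lt_inj_VMM; [exact: gM_VMM | exact: VMM_scale |].
rewrite gM_label_V00 // PsiE nu_i0 addr0.
by rewrite scalerA LzD expr1z mulfK ?L_neq0.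
Qed.

Let level (m : nat) (v : pt) := L ^ (- (M + m%:Z)) *: v.

Lemma levelD m k v : level (m + k)%N v = (L^-1) ^+ k *: level m v.
Proof.
rewrite /level scalerA; congr (_ *: _).
by rewrite exprnP exprz_inv -LzD PoszD; congr (L ^ _); ring.
Qed.

(* Rescale [v] to order [- m] for an [m] at which it is a vertex of an [m]-cell,
   fold it back onto [V0] and read the label there; by [iter_fold_shrink] the
   choice of [m] does not matter. *)
Definition fold_label (v : pt) : A :=
  if pselect (exists m, cell_vertex m (level m v)) is left H
  then let m := projT1 (cid H) in l0 (L ^ M *: iter m (fold rot0) (level m v))
  else l0 v.

Lemma fold_labelE m v : cell_vertex m (level m v) ->
  fold_label v = l0 (L ^ M *: iter m (fold rot0) (level m v)).
Proof.
move=> hm; rewrite /fold_label; case: pselect => [H|[]]; last by exists m.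
case: (cid H) => m0 hm0 /=.
have := iter_fold_shrink rot0_consistent nu_i0 rot0_i0 m hm0.
have := iter_fold_shrink rot0_consistent nu_i0 rot0_i0 m0 hm.
by rewrite -!levelD addnC => -> ->.
Qed.

Lemma fold_label_VMM v : VMM L nu M v -> fold_label v = l0 v.
Proof.
move=> /VMMP [z hz ->].
have e0 : level 0 (L ^ M *: z) = z by rewrite /level addr0 -invr_expz scaleLzK.
by rewrite (fold_labelE (m := 0)) e0 //; exists (fun _ => i0), z.
Qed.

Lemma fold_label_good : good_labelling L nu M fold_label.
Proof.
split.
  have [l0_inj l0_surj] := l0_bij; split.
    by move=> v w hv hw; rewrite !fold_label_VMM //; apply: l0_inj.
  by move=> a; have [v [hv <-]] := l0_surj a; exists v; rewrite fold_label_VMM.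
move=> t [n [w ->]].
have [f hf ef] := iter_fold_Psi_word rot0_RotM0 rot0_consistent n.+1 w.
exists (rescale M f); split; first by have := RotM_rescale M hf; rewrite add0r.
move=> v /VcxP [z hz ->].
have tE : \sum_(j < n.+1) sc (L ^ (M + 1 + (j : nat)%:Z)) (nu (w j)) =
    L ^ M *: \sum_(j < n.+1) L ^+ j.+1 *: nu (w j).
  rewrite scaler_sumr; apply: eq_bigr => j _.
  by rewrite scE scalerA exprnP -LzD -addrA; congr (L ^ (M + _) *: _).
have levelE : level n.+1 (L ^ M *: z + \sum_(j < n.+1) sc (L ^ (M + 1 + (j : nat)%:Z)) (nu (w j)))
    = Psi_word w n.+1 z.
  rewrite tE -scalerDr -Psi_word_scale /level !scalerA exprnP -!LzD.
  by rewrite [X in L ^ X](_ : _ = 0) ?expr0z ?scale1r //; ring.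
rewrite (fold_labelE (m := n.+1)) levelE ?ef //; last by exists w, z.
rewrite addrK /rescale scaleLzK fold_label_VMM //.
exact/VMM_scale/RotM0_V00.
Qed.

End Labelling.

Definition extends_with_cell_rotations (A : finType) (M : int) (l0 : pt -> A) :=
  exists lt : pt -> A, (forall v, VMM L nu M v -> lt v = l0 v) /\
    forall i : 'I_N, exists f, RotM L nu M f /\
      forall v, Vcx L nu M (sc (L ^ (M + 1)) (nu i)) v ->
        lt (f (v - sc (L ^ (M + 1)) (nu i))) = lt v.

Lemma good_labelling_of_extension (A : finType) M (l0 : pt -> A) i0 :
  nu i0 = 0 -> bij_onto (VMM L nu M) l0 -> extends_with_cell_rotations M l0 ->
  good_labelling_property L nu A.
Proof.
move=> nu_i0 l0_bij [lt [lt_l0 hrot]]; have [gM hgM] := boolp.choice hrot.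
exists M, (fold_label M l0 gM).
exact: (fold_label_good l0_bij lt_l0 (fun i => (hgM i).1) (fun i => (hgM i).2) nu_i0).
Qed.

(* Transport a good labelling of order [M'] to order [M] by scaling with
   [L ^ (M - M')], then relabel its vertices through [l0]. *)
Lemma extension_of_good_labelling (A : finType) M (l0 : pt -> A) :
  bij_onto (VMM L nu M) l0 -> good_labelling_property L nu A ->
  extends_with_cell_rotations M l0.
Proof.
move=> l0_bij [M' [l [[l_inj l_surj] l_good]]].
set c := L ^ (M - M'); have cM : L ^ M = c * L ^ M' by rewrite /c -LzD subrK.
have [vertex vertexP] := boolp.choice l_surj.
have vertexK z : V0 z -> vertex (l (L ^ M' *: z)) = L ^ M' *: z.
  move=> hz; have [hv lv] := vertexP (l (L ^ M' *: z)).
  by apply: l_inj lv => //; apply/VMMP; exists z.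
exists (fun v => l0 (c *: vertex (l (c^-1 *: v)))); split.
  by move=> _ /VMMP [z hz ->]; rewrite cM -scalerA scaleLzK vertexK.
move=> i; set t := sc (L ^ (M' + 1)) (nu i).
have [f [hf ef]] : exists f, RotM L nu M' f /\ forall v, Vcx L nu M' t v -> l v = l (f (v - t)).
  by apply: l_good; exists 0%N, (fun=> i); rewrite big_ord1 /= addr0.
exists (rescale (M - M') f); split.
  by have := RotM_rescale (M - M') hf; rewrite addrCA subrr addr0.
move=> _ /VcxP [z hz ->].
have tE : sc (L ^ (M + 1)) (nu i) = c *: t.
  by rewrite /t !scE scalerA -LzD; congr (L ^ _ *: _); ring.
have hv : Vcx L nu M' t (L ^ M' *: z + t) by apply/VcxP; exists z.
have c0 : c != 0 by apply: Lz_neq0.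
rewrite addrK /rescale -/c (scalerK c0) cM -scalerA (scalerK c0) tE -scalerDr (scalerK c0).
by rewrite (ef _ hv) addrK.
Qed.

End Fractal.

Lemma simple_nested_fractal_nu_inj (R : realType) (L : R) (N : nat)
    (nu : 'I_N -> (R * R)%type) (K : set (R * R)%type) :
  simple_nested_fractal L nu K -> injective nu.
Proof.
case=> _ _ [[U [_ [u hu] _ _ disj]] _ _] _ i j e; apply/eqP; apply: contraT => ij.
have : (Psi L nu i @` U `&` Psi L nu j @` U) (Psi L nu i u).
  by split; exists u => //; rewrite /Psi e.
by rewrite disj.
Qed.

Unset Implicit Arguments.

Theorem proposition3p6 (R : realType) (L : R) (N : nat) (nu : 'I_N -> (R * R)%type)
  (K : set (R * R)%type) (HK : simple_nested_fractal L nu K)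
  (A : finType) (M : int) (l0 : (R * R)%type -> A)
  (Hl0 : bij_onto (VMM L nu M) l0) :
  good_labelling_property L nu A <->
  exists lt : (R * R)%type -> A,
    (forall v, VMM L nu M v -> lt v = l0 v) /\
    forall i : 'I_N, exists f, RotM L nu M f /\
      forall v, Vcx L nu M (sc (L ^ (M + 1)) (nu i)) v ->
        lt (f (v - sc (L ^ (M + 1)) (nu i))) = lt v.
Proof.
have nu_inj := simple_nested_fractal_nu_inj HK.
case: HK => [[L_gt1 N_ge2 nu0] [_ _ K_attractor] [_ K_nesting V0_symmetric] [_ V0_three]].
have N_gt0 : (0 < N)%N by apply: leq_trans N_ge2.
have nu_i0 : nu (Ordinal N_gt0) = 0 by apply: nu0.
split => [good|ext]; first exact: (extension_of_good_labelling L_gt1 Hl0 good).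
exact: (good_labelling_of_extension L_gt1 nu_inj V0_symmetric V0_three K_attractor K_nesting
  nu_i0 Hl0 ext).
Qed.
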